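(* For the discrete nonlinear Schrödinger system $$u_{1,0}-u_{0,1}-\frac{\alpha-\beta}{1+u_{0,0}v_{1,1}}\,u_{0,0}=0,\qquad v_{1,0}-v_{0,1}+\frac{\alpha-\beta}{1+u_{0,0}v_{1,1}}\,v_{1,1}=0,$$ the following is a symmetry: $$\frac{\partial u_{0,0}}{\partial t_1}=\frac{u_{-1,0}}{1+u_{-1,0}v_{1,0}},\qquad \frac{\partial v_{0,0}}{\partial t_1}=\frac{-v_{1,0}}{1+u_{-1,0}v_{1,0}},$$ and the following is an extended symmetry: $$\frac{\partial u_{0,0}}{\partial \tau}=\frac{n\,u_{-1,0}}{1+u_{-1,0}v_{1,0}},\qquad \frac{\partial v_{0,0}}{\partial \tau}=\frac{-n\,v_{1,0}}{1+u_{-1,0}v_{1,0}},\qquad \frac{\partial\alpha}{\partial\tau}=1.$$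
   Context: Unknowns $u,v$ on $\mathbb Z^2$, $u_{i,j}=u(n+i,m+j)$, similarly $v$; $\alpha\neq\beta$ constants. Shifts $\mathcal S:n\mapsto n+1$, $\mathcal T:m\mapsto m+1$. For a system $\boldsymbol Q(\boldsymbol u_{0,0},\boldsymbol u_{1,0},\boldsymbol u_{0,1},\boldsymbol u_{1,1};\alpha)=\boldsymbol 0$ with $\boldsymbol u=(u,v)$ and Jacobians $\mathrm Q_{(p,q)}=\partial\boldsymbol Q/\partial\boldsymbol u_{p,q}$: $\boldsymbol F(n,m,[\boldsymbol u])$ is a symmetry ($\partial_t\boldsymbol u_{0,0}=\boldsymbol F$) if $\mathrm Q_{(0,0)}\boldsymbol F+\mathrm Q_{(1,0)}\mathcal S(\boldsymbol F)+\mathrm Q_{(0,1)}\mathcal T(\boldsymbol F)+\mathrm Q_{(1,1)}\mathcal S\mathcal T(\boldsymbol F)=\boldsymbol 0$ on all solutions; $(\boldsymbol M,\xi)$ is an extended symmetry ($\partial_\tau\boldsymbol u_{0,0}=\boldsymbol M$, $\partial_\tau\alpha=\xi$) if $\mathrm Q_{(0,0)}\boldsymbol M+\mathrm Q_{(1,0)}\mathcal S(\boldsymbol M)+\mathrm Q_{(0,1)}\mathcal T(\boldsymbol M)+\mathrm Q_{(1,1)}\mathcal S\mathcal T(\boldsymbol M)+\xi\,\partial_\alpha\boldsymbol Q=\boldsymbol 0$ on all solutions. Here $\mathcal S^p\mathcal T^q(\boldsymbol F)$ is $\boldsymbol F$ with $n\to n+p$, $m\to m+q$ and all shifts of $\boldsymbol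 u$ shifted accordingly. *)

From Stdlib Require Import Reals ZArith.
From Coquelicot Require Import Coquelicot.
Open Scope R_scope.

(** Lattice fields: u(n,m), with u_{i,j} = u (n+i) (m+j). *)
Definition field := Z -> Z -> R.

(** A component of a quad-equation system Q(u00,u10,u01,u11; alpha), with
    u = (u,v):  arguments are alpha, then (u,v) at (0,0),(1,0),(0,1),(1,1). *)
Definition quad := R -> R -> R -> R -> R -> R -> R -> R -> R -> R.

Definition NLS_Q1 (beta : R) : quad :=
  fun alpha u00 v00 u10 v10 u01 v01 u11 v11 =>
    u10 - u01 - (alpha - beta) / (1 + u00 * v11) * u00.
Definition NLS_Q2 (beta : R) : quad :=
  fun alpha u00 v00 u10 v10 u01 v01 u11 v11 =>
    v10 - v01 + (alpha - beta) / (1 + u00 * v11) * v11.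

Definition nls_solution (alpha beta : R) (u v : field) : Prop :=
  forall n m : Z,
    1 + u n m * v (n + 1)%Z (m + 1)%Z <> 0 /\
    NLS_Q1 beta alpha (u n m) (v n m) (u (n+1)%Z m) (v (n+1)%Z m)
      (u n (m+1)%Z) (v n (m+1)%Z) (u (n+1)%Z (m+1)%Z) (v (n+1)%Z (m+1)%Z) = 0 /\
    NLS_Q2 beta alpha (u n m) (v n m) (u (n+1)%Z m) (v (n+1)%Z m)
      (u n (m+1)%Z) (v n (m+1)%Z) (u (n+1)%Z (m+1)%Z) (v (n+1)%Z (m+1)%Z) = 0.

(** A component of a characteristic F(n,m,[u]): given the fields and the point
    (n,m), its value.  S^p T^q F is this function evaluated at (n+p,m+q). *)
Definition charac := field -> field -> Z -> Z -> R.

(** e |-> Q(u + e*F, shifted accordingly; alpha + e*xi), at the point (n,m).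
    Its derivative at e = 0 is
    Q_(0,0) F + Q_(1,0) S F + Q_(0,1) T F + Q_(1,1) S T F + xi dQ/dalpha. *)
Definition lin_curve (Q : quad) (alpha xi : R) (u v : field) (Fu Fv : charac)
    (n m : Z) : R -> R :=
  fun e =>
    Q (alpha + e * xi)
      (u n m + e * Fu u v n m) (v n m + e * Fv u v n m)
      (u (n+1)%Z m + e * Fu u v (n+1)%Z m) (v (n+1)%Z m + e * Fv u v (n+1)%Z m)
      (u n (m+1)%Z + e * Fu u v n (m+1)%Z) (v n (m+1)%Z + e * Fv u v n (m+1)%Z)
      (u (n+1)%Z (m+1)%Z + e * Fu u v (n+1)%Z (m+1)%Z)
      (v (n+1)%Z (m+1)%Z + e * Fv u v (n+1)%Z (m+1)%Z).

(** (Mu,Mv; xi) is an extended symmetry of the NLS system on all solutions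
    satisfying the domain condition D (where the characteristic is defined). *)
Definition nls_ext_symmetry (alpha beta : R) (D : field -> field -> Prop)
    (Mu Mv : charac) (xi : R) : Prop :=
  forall u v : field, nls_solution alpha beta u v -> D u v ->
  forall n m : Z,
    is_derive (lin_curve (NLS_Q1 beta) alpha xi u v Mu Mv n m) 0 0 /\
    is_derive (lin_curve (NLS_Q2 beta) alpha xi u v Mu Mv n m) 0 0.

Definition nls_symmetry (alpha beta : R) (D : field -> field -> Prop)
    (Fu Fv : charac) : Prop :=
  forall u v : field, nls_solution alpha beta u v -> D u v ->
  forall n m : Z,
    is_derive (fun e => lin_curve (NLS_Q1 beta) alpha 0 u v Fu Fv n m e) 0 0 /\
    is_derive (fun e => lin_curve (NLS_Q2 beta) alpha 0 u v Fu Fv n m e) 0 0.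

Definition sym_domain (u v : field) : Prop :=
  forall n m : Z, 1 + u (n - 1)%Z m * v (n + 1)%Z m <> 0.

Definition F1u : charac := fun u v n m =>
  u (n - 1)%Z m / (1 + u (n - 1)%Z m * v (n + 1)%Z m).
Definition F1v : charac := fun u v n m =>
  - v (n + 1)%Z m / (1 + u (n - 1)%Z m * v (n + 1)%Z m).

Definition Mu : charac := fun u v n m =>
  IZR n * u (n - 1)%Z m / (1 + u (n - 1)%Z m * v (n + 1)%Z m).
Definition Mv : charac := fun u v n m =>
  - (IZR n * v (n + 1)%Z m) / (1 + u (n - 1)%Z m * v (n + 1)%Z m).

From Stdlib Require Import Reals ZArith Lra.
From Coquelicot Require Import Coquelicot.
Open Scope R_scope.

(* Write P_n = 1 + u_{n,m} v_{n+1,m+1}.  Both characteristics have the form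
   lambda(n) (F1u, F1v), with lambda = 1 resp. lambda(n) = n.  On a solution the
   quantity E_n = P_{n-1} P_n - (alpha - beta) u_{n-1,m} v_{n+1,m+1} equals both
   (1 + u_{n-1,m} v_{n+1,m}) P_n and (1 + u_{n-1,m+1} v_{n+1,m+1}) P_{n-1}, so every
   shift of F1 becomes a rational function of u on row m and v on row m + 1.  In
   these terms the linearised equations at (n,m) collapse to
   (lambda(n+1) - lambda(n) - xi) u_{n,m} / P_n  and  -(lambda(n+1) - lambda(n) - xi) v_{n+1,m+1} / P_n,
   which vanish exactly when lambda(n+1) - lambda(n) = xi. *)

Definition nls_den (u v : field) (n m : Z) : R :=
  1 + u n m * v (n + 1)%Z (m + 1)%Z.

Lemma is_derive_lin_curve_Q1 (alpha beta xi : R) (u v : field) (Fu Fv : charac)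
    (n m : Z) :
  nls_den u v n m <> 0 ->
  is_derive (lin_curve (NLS_Q1 beta) alpha xi u v Fu Fv n m) 0
    ((Fu u v (n + 1)%Z m
        + (alpha - beta) * u n m ^ 2 * Fv u v (n + 1)%Z (m + 1)%Z / nls_den u v n m ^ 2)
     - (Fu u v n (m + 1)%Z + (alpha - beta) * Fu u v n m / nls_den u v n m ^ 2)
     - xi * u n m / nls_den u v n m).
Proof.
  unfold nls_den, lin_curve, NLS_Q1; intro HP.
  auto_derive.
  - rewrite !Rmult_0_l, !Rplus_0_r; exact HP.
  - rewrite !Rmult_0_l, !Rplus_0_r; field; exact HP.
Qed.

Lemma is_derive_lin_curve_Q2 (alpha beta xi : R) (u v : field) (Fu Fv : charac)
    (n m : Z) :
  nls_den u v n m <> 0 ->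
  is_derive (lin_curve (NLS_Q2 beta) alpha xi u v Fu Fv n m) 0
    ((Fv u v (n + 1)%Z m + (alpha - beta) * Fv u v (n + 1)%Z (m + 1)%Z / nls_den u v n m ^ 2)
     - (Fv u v n (m + 1)%Z
        + (alpha - beta) * v (n + 1)%Z (m + 1)%Z ^ 2 * Fu u v n m / nls_den u v n m ^ 2)
     + xi * v (n + 1)%Z (m + 1)%Z / nls_den u v n m).
Proof.
  unfold nls_den, lin_curve, NLS_Q2; intro HP.
  auto_derive.
  - rewrite !Rmult_0_l, !Rplus_0_r; exact HP.
  - rewrite !Rmult_0_l, !Rplus_0_r; field; exact HP.
Qed.

Section NLSSolution.

Variables (alpha beta : R) (u v : field).
Hypothesis Hsol : nls_solution alpha beta u v.
Hypothesis Hdom : sym_domain u v.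

Definition nls_cross (n m : Z) : R :=
  nls_den u v (n - 1) m * nls_den u v n m
  - (alpha - beta) * u (n - 1)%Z m * v (n + 1)%Z (m + 1)%Z.

Lemma nls_den_neq0 n m : nls_den u v n m <> 0.
Proof. apply Hsol. Qed.

Lemma nls_solution_u_succ_m n m :
  u n (m + 1)%Z = u (n + 1)%Z m - (alpha - beta) * u n m / nls_den u v n m.
Proof.
  destruct (Hsol n m) as [_ [HQ1 _]]; unfold NLS_Q1 in HQ1; unfold nls_den.
  lra.
Qed.

Lemma nls_solution_v_succ_n n m :
  v (n + 1)%Z m = v n (m + 1)%Z - (alpha - beta) * v (n + 1)%Z (m + 1)%Z / nls_den u v n m.
Proof.
  destruct (Hsol n m) as [_ [_ HQ2]]; unfold NLS_Q2 in HQ2; unfold nls_den.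
  lra.
Qed.

Lemma nls_cross_row n m :
  (1 + u (n - 1)%Z m * v (n + 1)%Z m) * nls_den u v n m = nls_cross n m.
Proof.
  rewrite nls_solution_v_succ_n.
  pose proof (nls_den_neq0 n m).
  unfold nls_cross, nls_den in *; rewrite Z.sub_add.
  field; assumption.
Qed.

Lemma nls_cross_row_succ n m :
  (1 + u (n - 1)%Z (m + 1)%Z * v (n + 1)%Z (m + 1)%Z) * nls_den u v (n - 1) m
  = nls_cross n m.
Proof.
  rewrite nls_solution_u_succ_m.
  pose proof (nls_den_neq0 (n - 1)%Z m).
  unfold nls_cross, nls_den in *; rewrite Z.sub_add in *.
  field; assumption.
Qed.

Lemma nls_cross_neq0 n m : nls_cross n m <> 0.
Proof.
  rewrite <- nls_cross_row.
  apply Rmult_integral_contrapositive_currified; [apply Hdom | apply nls_den_neq0].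
Qed.

Lemma F1u_eq_cross n m :
  F1u u v n m = u (n - 1)%Z m * nls_den u v n m / nls_cross n m.
Proof.
  pose proof (Hdom n m); pose proof (nls_den_neq0 n m).
  unfold F1u; rewrite <- nls_cross_row.
  field; split; assumption.
Qed.

Lemma F1u_succ_m_eq_cross n m :
  F1u u v n (m + 1)%Z
  = (u n m * nls_den u v (n - 1) m - (alpha - beta) * u (n - 1)%Z m) / nls_cross n m.
Proof.
  pose proof (Hdom n (m + 1)%Z); pose proof (nls_den_neq0 (n - 1)%Z m).
  replace (u n m * nls_den u v (n - 1) m - (alpha - beta) * u (n - 1)%Z m)
    with (u (n - 1)%Z (m + 1)%Z * nls_den u v (n - 1) m)
    by (rewrite nls_solution_u_succ_m, Z.sub_add; field; assumption).
  unfold F1u; rewrite <- nls_cross_row_succ.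
  field; split; assumption.
Qed.

Lemma F1v_eq_cross n m :
  F1v u v n m
  = - (v n (m + 1)%Z * nls_den u v n m - (alpha - beta) * v (n + 1)%Z (m + 1)%Z)
    / nls_cross n m.
Proof.
  pose proof (Hdom n m); pose proof (nls_den_neq0 n m).
  replace (v n (m + 1)%Z * nls_den u v n m - (alpha - beta) * v (n + 1)%Z (m + 1)%Z)
    with (v (n + 1)%Z m * nls_den u v n m)
    by (rewrite nls_solution_v_succ_n; field; assumption).
  unfold F1v; rewrite <- nls_cross_row.
  field; split; assumption.
Qed.

Lemma F1v_succ_m_eq_cross n m :
  F1v u v n (m + 1)%Z = - v (n + 1)%Z (m + 1)%Z * nls_den u v (n - 1) m / nls_cross n m.
Proof.
  pose proof (Hdom n (m + 1)%Z); pose proof (nls_den_neq0 (n - 1)%Z m).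
  unfold F1v; rewrite <- nls_cross_row_succ.
  field; split; assumption.
Qed.

Lemma F1u_succ_n n m :
  F1u u v (n + 1)%Z m
  = u n m / nls_den u v n m
    - (alpha - beta) * u n m ^ 2 * F1v u v (n + 1)%Z (m + 1)%Z / nls_den u v n m ^ 2.
Proof.
  pose proof (nls_cross_neq0 (n + 1) m); pose proof (nls_den_neq0 n m).
  rewrite F1u_eq_cross, F1v_succ_m_eq_cross.
  unfold nls_cross, nls_den in *; rewrite Z.add_simpl_r in *.
  field; split; assumption.
Qed.

Lemma F1u_succ_m n m :
  F1u u v n (m + 1)%Z
  = u n m / nls_den u v n m - (alpha - beta) * F1u u v n m / nls_den u v n m ^ 2.
Proof.
  pose proof (nls_cross_neq0 n m); pose proof (nls_den_neq0 n m).
  rewrite F1u_succ_m_eq_cross, F1u_eq_cross.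
  unfold nls_cross, nls_den in *; rewrite Z.sub_add in *.
  field; split; assumption.
Qed.

Lemma F1v_succ_n n m :
  F1v u v (n + 1)%Z m
  = - v (n + 1)%Z (m + 1)%Z / nls_den u v n m
    - (alpha - beta) * F1v u v (n + 1)%Z (m + 1)%Z / nls_den u v n m ^ 2.
Proof.
  pose proof (nls_cross_neq0 (n + 1) m); pose proof (nls_den_neq0 n m).
  rewrite F1v_eq_cross, F1v_succ_m_eq_cross.
  unfold nls_cross, nls_den in *; rewrite Z.add_simpl_r in *.
  field; split; assumption.
Qed.

Lemma F1v_succ_m n m :
  F1v u v n (m + 1)%Z
  = - v (n + 1)%Z (m + 1)%Z / nls_den u v n m
    - (alpha - beta) * v (n + 1)%Z (m + 1)%Z ^ 2 * F1u u v n m / nls_den u v n m ^ 2.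
Proof.
  pose proof (nls_cross_neq0 n m); pose proof (nls_den_neq0 n m).
  rewrite F1v_succ_m_eq_cross, F1u_eq_cross.
  unfold nls_cross, nls_den in *; rewrite Z.sub_add in *.
  field; split; assumption.
Qed.

End NLSSolution.

Lemma is_derive_eq_value (f : R -> R) (x l l' : R) :
  l = l' -> is_derive f x l -> is_derive f x l'.
Proof. intros <-; trivial. Qed.

Lemma nls_ext_symmetry_scaled_F1 (alpha beta xi : R) (lam : Z -> R) (Fu Fv : charac) :
  (forall n, lam (n + 1)%Z - lam n = xi) ->
  (forall u v n m, Fu u v n m = lam n * F1u u v n m) ->
  (forall u v n m, Fv u v n m = lam n * F1v u v n m) ->
  nls_ext_symmetry alpha beta sym_domain Fu Fv xi.
Proof.
  intros Hlam HFu HFv u v Hsol Hdom n m.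
  pose proof (nls_den_neq0 alpha beta u v Hsol n m) as HP.
  split.
  - refine (is_derive_eq_value _ _ _ _ _ (is_derive_lin_curve_Q1 _ _ _ _ _ _ _ _ _ HP)).
    rewrite !HFu, !HFv, <- (Hlam n).
    rewrite (F1u_succ_n alpha beta u v Hsol Hdom n m), (F1u_succ_m alpha beta u v Hsol Hdom n m).
    field; exact HP.
  - refine (is_derive_eq_value _ _ _ _ _ (is_derive_lin_curve_Q2 _ _ _ _ _ _ _ _ _ HP)).
    rewrite !HFu, !HFv, <- (Hlam n).
    rewrite (F1v_succ_n alpha beta u v Hsol Hdom n m), (F1v_succ_m alpha beta u v Hsol Hdom n m).
    field; exact HP.
Qed.

Theorem mainTheorem6 (alpha beta : R) (Hab : alpha <> beta) :
  nls_symmetry alpha beta sym_domain F1u F1v /\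
  nls_ext_symmetry alpha beta sym_domain Mu Mv 1.
Proof.
  split.
  - apply (nls_ext_symmetry_scaled_F1 alpha beta 0 (fun _ => 1)); intros; ring.
  - apply (nls_ext_symmetry_scaled_F1 alpha beta 1 IZR); intros.
    + rewrite plus_IZR; ring.
    + unfold Mu, F1u, Rdiv; ring.
    + unfold Mv, F1v, Rdiv; ring.
Qed.
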